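(* Let $0<k_1<k_2$, $d>0$, and assume $2d\sqrt{k_2^2-k_1^2}\neq n\pi$ for every positive integer $n$. Consider the equation $W(\xi,\delta)=0$ for $\xi\in\mathbb{R}$ and $\delta\ge0$ (where $\delta=0$ means $\delta=0^+$). Its solutions are finitely many points $\{\pm\xi_n:\ n=1,\dots,N\}$, all occurring with $\delta=0^+$, each a simple zero of $\xi\mapsto W(\xi,0^+)$, and satisfying $k_1<|\xi_n|<k_2$; there are no other solutions. Moreover $N\ge1$, i.e. there is at least one nontrivial solution of $W(\xi,0^+)=0$.
   Context: Let $q(x)=(k_2^2-k_1^2)\chi_{[-d,d]}(x)$. The square root $\sqrt{z}$ is the principal branch on $\mathbb{C}\setminus(-\infty,0]$, positive on $(0,\infty)$. For $\xi\in\mathbb{R}$, $\delta>0$, let $u_\pm(\xi,\delta;\cdot)$ be the solutions of $u''+(k_1^2+q(x)-\xi^2+i\delta)u=0$ (with $u,u'$ continuous) determined by $u_\pm(\xi,\delta;x)=e^{\pm ix\sqrt{k_1^2-\xi^2+i\delta}}$ for $\pm x>d$; $u_\pm(\xi,0^+;\cdot)$ denotes the limit as $\delta\to0^+$ (so $\sqrt{k_1^2-\xi^2}$ is replaced by $i\sqrt{\xi^2-k_1^2}$ when $|\xi|>k_1$). The Wronskian is $W(\xi,\delta)=u_-\partial_xu_+-u_+\partial_xu_-$ (independent of $x$), and $W(\xi,0^+)=\lim_{\delta\to0^+}W(\xi,\delta)$. *)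

From Stdlib Require Import Reals.
From Coquelicot Require Import Coquelicot.
Open Scope R_scope.

Definition Cexp (z : C) : C :=
  (exp (Re z) * cos (Im z), exp (Re z) * sin (Im z)).

(* Principal square root on C \ (-oo,0]:
   sqrt z = sqrt((|z| + Re z)/2) + i sgn(Im z) sqrt((|z| - Re z)/2),
   positive on (0,oo).  (Its value on (-oo,0] is irrelevant here:
   it is only ever applied with Im z = delta > 0.) *)
Definition Csqrt (z : C) : C :=
  (sqrt ((Cmod z + Re z) / 2),
   (if Rle_dec 0 (Im z) then 1 else -1) * sqrt ((Cmod z - Re z) / 2)).

Definition q (k1 k2 d : R) (x : R) : R :=
  if Rle_dec (- d) x then (if Rle_dec x d then k2 ^ 2 - k1 ^ 2 else 0) else 0.

Definition coef (k1 k2 d xi delta : R) (x : R) : C :=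
  (k1 ^ 2 + q k1 k2 d x - xi ^ 2, delta).

(* [u] (with derivative [u']) solves u'' + c(x) u = 0 with u, u'
   continuous on R; the second derivative exists and the equation holds
   away from the jump points x = -d, x = d of q. *)
Definition solves_eq (k1 k2 d xi delta : R) (u u' : R -> C) : Prop :=
  (forall x, is_derive u x (u' x)) /\
  (forall x, continuous u' x) /\
  (forall x, x <> d -> x <> - d ->
     is_derive u' x (Copp (Cmult (coef k1 k2 d xi delta x) (u x)))).

Definition kappa (k1 xi delta : R) : C := Csqrt (k1 ^ 2 - xi ^ 2, delta).

Definition is_u_plus (k1 k2 d xi delta : R) (u u' : R -> C) : Prop :=
  solves_eq k1 k2 d xi delta u u' /\
  (forall x, d < x -> u x = Cexp (Cmult (0, x) (kappa k1 xi delta))).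

Definition is_u_minus (k1 k2 d xi delta : R) (u u' : R -> C) : Prop :=
  solves_eq k1 k2 d xi delta u u' /\
  (forall x, x < - d -> u x = Cexp (Cmult (0, - x) (kappa k1 xi delta))).

Definition wronskian (um um' up up' : R -> C) (x : R) : C :=
  Cminus (Cmult (um x) (up' x)) (Cmult (up x) (um' x)).

(* On (-d, d) the equation reads u'' = -c u with c = k2^2 - xi^2 + i delta, so for
   mu = sqrt c the quantities (u' + i mu u) e^(-i mu x) and (u' - i mu u) e^(i mu x) are
   constant there.  At x = d the solution u_+ is the plane wave e^(i kappa x), which gives
   the Cauchy data of u_+ at 0; since q is even, u_-(-x) is again a u_+, so
   W = 2 u_+(0) u_+'(0) and
     W = e^(2 i d kappa) ((kappa - mu)^2 e^(2 i d mu) - (kappa + mu)^2 e^(-2 i d mu)) / (2 i mu).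
   For delta > 0 both kappa and mu have nonnegative real and positive imaginary part, so
   |kappa - mu| < |kappa + mu| and |e^(2 i d mu)| < 1 < |e^(-2 i d mu)|: W cannot vanish.
   Written as e^(2 i d kappa) ((mu^2 + kappa^2) sin(2 d mu)/mu + 2 i kappa cos(2 d mu)), W has
   a limit W0 as delta -> 0+.  For |xi| <= k1 the two terms of W0 cannot cancel unless
   |xi| = k1 and sin(2 d sqrt(k2^2 - k1^2)) = 0, which is excluded; for |xi| >= k2, W0 is a
   negative real.  For k1 < |xi| < k2, W0 is a positive multiple of sin(phase |xi|) with
   phase x = 2 d m - 2 atan(g / m), m = sqrt(k2^2 - x^2), g = sqrt(x^2 - k1^2), which decreases
   with negative derivative from 2 d sqrt(k2^2 - k1^2) to values below 0.  Hence the zeros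
   are simple and are the solutions of phase = j pi for the finitely many j >= 0 with
   j pi < 2 d sqrt(k2^2 - k1^2), of which j = 0 always exists. *)

From Stdlib Require Import Reals Lra Lia ZArith ClassicalEpsilon.
From Coquelicot Require Import Coquelicot.
Open Scope R_scope.

(** * Calculus of complex-valued functions of a real variable *)

Ltac unfold_C := unfold Cexp, Re, Im, Cminus, Cdiv, Cmult, Cplus, Copp, Cinv; simpl.

Tactic Notation "derivative_as" constr(l) :=
  match goal with |- is_derive _ _ ?l0 => replace l0 with l by ring end.

Lemma is_derive_fst (f : R -> C) (x : R) (l : C) :
  is_derive f x l -> is_derive (fun t => fst (f t)) x (fst l).
Proof.
  intros H. eapply filterdiff_ext_lin.
  - apply (filterdiff_comp' f fst x _ fst H).
    apply filterdiff_linear, (@is_linear_fst R_AbsRing R_NormedModule R_NormedModule).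
  - reflexivity.
Qed.

Lemma is_derive_snd (f : R -> C) (x : R) (l : C) :
  is_derive f x l -> is_derive (fun t => snd (f t)) x (snd l).
Proof.
  intros H. eapply filterdiff_ext_lin.
  - apply (filterdiff_comp' f snd x _ snd H).
    apply filterdiff_linear, (@is_linear_snd R_AbsRing R_NormedModule R_NormedModule).
  - reflexivity.
Qed.

Lemma is_derive_C (f : R -> C) (x : R) (l : C) :
  is_derive (fun t => fst (f t)) x (fst l) ->
  is_derive (fun t => snd (f t)) x (snd l) -> is_derive f x l.
Proof.
  intros H1 H2.
  apply (is_derive_ext
    (fun t => plus (scal (fst (f t)) ((1, 0) : C)) (scal (snd (f t)) ((0, 1) : C)))).
  { intros t. destruct (f t) as [a b]. unfold plus, scal; simpl.
    unfold prod_plus, prod_scal; simpl. f_equal; compute; ring. }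
  replace l with (plus (scal (fst l) ((1, 0) : C)) (scal (snd l) ((0, 1) : C))).
  - apply (@is_derive_plus _ C_R_NormedModule);
      apply (@is_derive_scal_l _ C_R_NormedModule); assumption.
  - destruct l as [a b]. unfold plus, scal; simpl.
    unfold prod_plus, prod_scal; simpl. f_equal; compute; ring.
Qed.

Lemma is_derive_C_unique (f : R -> C) (x : R) (l1 l2 : C) :
  is_derive f x l1 -> is_derive f x l2 -> l1 = l2.
Proof.
  intros H1 H2.
  pose proof (is_derive_unique _ _ _ (is_derive_fst _ _ _ H1)) as A1.
  pose proof (is_derive_unique _ _ _ (is_derive_fst _ _ _ H2)) as A2.
  pose proof (is_derive_unique _ _ _ (is_derive_snd _ _ _ H1)) as B1.
  pose proof (is_derive_unique _ _ _ (is_derive_snd _ _ _ H2)) as B2.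
  destruct l1, l2; simpl in *; f_equal; congruence.
Qed.

Lemma is_derive_Cmult (f g : R -> C) (x : R) (a b : C) :
  is_derive f x a -> is_derive g x b ->
  is_derive (fun t => (f t * g t)%C) x (a * g x + f x * b)%C.
Proof.
  intros Hf Hg.
  pose proof (is_derive_fst _ _ _ Hf) as Hf1. pose proof (is_derive_snd _ _ _ Hf) as Hf2.
  pose proof (is_derive_fst _ _ _ Hg) as Hg1. pose proof (is_derive_snd _ _ _ Hg) as Hg2.
  apply is_derive_C; unfold_C.
  - derivative_as (fst a * fst (g x) + fst (f x) * fst b
                          - (snd a * snd (g x) + snd (f x) * snd b)).
    exact (is_derive_minus _ _ _ _ _ (is_derive_mult _ _ _ _ _ Hf1 Hg1 Rmult_comm)
                                     (is_derive_mult _ _ _ _ _ Hf2 Hg2 Rmult_comm)).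
  - derivative_as (fst a * snd (g x) + fst (f x) * snd b
                          + (snd a * fst (g x) + snd (f x) * fst b)).
    exact (is_derive_plus _ _ _ _ _ (is_derive_mult _ _ _ _ _ Hf1 Hg2 Rmult_comm)
                                    (is_derive_mult _ _ _ _ _ Hf2 Hg1 Rmult_comm)).
Qed.

Lemma is_derive_Cexp (f : R -> C) (x : R) (a : C) :
  is_derive f x a -> is_derive (fun t => Cexp (f t)) x (a * Cexp (f x))%C.
Proof.
  intros H.
  pose proof (is_derive_fst _ _ _ H) as H1. pose proof (is_derive_snd _ _ _ H) as H2.
  pose proof (is_derive_comp _ _ _ _ _ (is_derive_exp (fst (f x))) H1) as He.
  pose proof (is_derive_comp _ _ _ _ _ (is_derive_cos (snd (f x))) H2) as Hc.
  pose proof (is_derive_comp _ _ _ _ _ (is_derive_sin (snd (f x))) H2) as Hs.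
  apply is_derive_C; unfold_C.
  - derivative_as (fst a * exp (fst (f x)) * cos (snd (f x))
                          + exp (fst (f x)) * (snd a * - sin (snd (f x)))).
    exact (is_derive_mult _ _ _ _ _ He Hc Rmult_comm).
  - derivative_as (fst a * exp (fst (f x)) * sin (snd (f x))
                          + exp (fst (f x)) * (snd a * cos (snd (f x)))).
    exact (is_derive_mult _ _ _ _ _ He Hs Rmult_comm).
Qed.

Lemma is_derive_Cplus (f g : R -> C) (x : R) (a b : C) :
  is_derive f x a -> is_derive g x b -> is_derive (fun t => (f t + g t)%C) x (a + b)%C.
Proof. intros Hf Hg. exact (@is_derive_plus _ C_R_NormedModule _ _ _ _ _ Hf Hg). Qed.

Lemma is_derive_Cconst (c : C) (x : R) : is_derive (fun _ : R => c) x (RtoC 0).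
Proof. exact (@is_derive_const _ C_R_NormedModule c x). Qed.

Lemma continuous_of_is_derive_C (f : R -> C) (x : R) (l : C) :
  is_derive f x l -> continuous f x.
Proof. intros H. exact (@ex_derive_continuous _ C_R_NormedModule f x (ex_intro _ l H)). Qed.

Lemma is_derive_Cmult_l (a : C) (f : R -> C) (x : R) (l : C) :
  is_derive f x l -> is_derive (fun t => (a * f t)%C) x (a * l)%C.
Proof.
  intros H. replace (a * l)%C with (RtoC 0 * f x + a * l)%C by ring.
  apply is_derive_Cmult; [apply is_derive_Cconst | exact H].
Qed.

Lemma is_derive_RtoC (x : R) : is_derive (fun t : R => RtoC t) x (RtoC 1).
Proof. apply is_derive_C; [exact (is_derive_id x) | exact (is_derive_const 0 x)]. Qed.

Lemma is_derive_Cexp_lin (a : C) (x : R) :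
  is_derive (fun t : R => Cexp (a * RtoC t)%C) x (a * Cexp (a * RtoC x))%C.
Proof.
  apply is_derive_Cexp. rewrite <- (Cmult_1_r a) at 1.
  apply is_derive_Cmult_l, is_derive_RtoC.
Qed.

Lemma is_derive_comp_opp (f : R -> C) (x : R) (l : C) :
  is_derive f (- x) l -> is_derive (fun t => f (- t)) x (- l)%C.
Proof.
  intros H.
  assert (Hc := is_derive_comp f Ropp x l (-1) H (is_derive_opp _ x 1 (is_derive_id x))).
  replace (Copp l) with (scal (-1) l); [exact Hc|].
  destruct l. unfold scal; simpl. unfold prod_scal; simpl. unfold_C.
  unfold scal; simpl. unfold mult; simpl. f_equal; ring.
Qed.

Section Limits.
Context {T : Type} {F : (T -> Prop) -> Prop} {FF : Filter F}.

Lemma filterlim_fst (f : T -> C) (a : C) :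
  filterlim f F (locally a) -> filterlim (fun t => fst (f t)) F (locally (fst a)).
Proof.
  intros H P [eps HP]. apply (H (fun y => P (fst y))).
  exists eps. intros y [Hy _]. exact (HP _ Hy).
Qed.

Lemma filterlim_snd (f : T -> C) (a : C) :
  filterlim f F (locally a) -> filterlim (fun t => snd (f t)) F (locally (snd a)).
Proof.
  intros H P [eps HP]. apply (H (fun y => P (snd y))).
  exists eps. intros y [_ Hy]. exact (HP _ Hy).
Qed.

Lemma filterlim_C (f : T -> C) (a : C) :
  filterlim (fun t => fst (f t)) F (locally (fst a)) ->
  filterlim (fun t => snd (f t)) F (locally (snd a)) -> filterlim f F (locally a).
Proof.
  intros H1 H2 P [eps HP]. unfold filtermap.
  apply (filter_imp (fun t => P (fst (f t), snd (f t)))).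
  { intros t. destruct (f t); exact (fun p => p). }
  apply (filterlim_pair _ _ H1 H2). exists (ball (fst a) eps) (ball (snd a) eps).
  - exists eps; auto.
  - exists eps; auto.
  - intros y z Hy Hz. apply HP. split; assumption.
Qed.

Lemma filterlim_Rplus (f g : T -> R) a b :
  filterlim f F (locally a) -> filterlim g F (locally b) ->
  filterlim (fun t => f t + g t) F (locally (a + b)).
Proof. intros Hf Hg. exact (filterlim_comp_2 f g Rplus Hf Hg (filterlim_plus a b)). Qed.

Lemma filterlim_Rmult (f g : T -> R) a b :
  filterlim f F (locally a) -> filterlim g F (locally b) ->
  filterlim (fun t => f t * g t) F (locally (a * b)).
Proof. intros Hf Hg. exact (filterlim_comp_2 f g Rmult Hf Hg (@filterlim_mult R_AbsRing a b)). Qed.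

Lemma filterlim_Ropp (f : T -> R) a :
  filterlim f F (locally a) -> filterlim (fun t => - f t) F (locally (- a)).
Proof. intros Hf. exact (filterlim_comp _ _ _ f Ropp F _ _ Hf (filterlim_opp a)). Qed.

Lemma filterlim_Rminus (f g : T -> R) a b :
  filterlim f F (locally a) -> filterlim g F (locally b) ->
  filterlim (fun t => f t - g t) F (locally (a - b)).
Proof. intros Hf Hg. apply filterlim_Rplus; [|apply filterlim_Ropp]; assumption. Qed.

Lemma filterlim_continuous (f : T -> R) (h : R -> R) a :
  filterlim f F (locally a) -> continuous h a ->
  filterlim (fun t => h (f t)) F (locally (h a)).
Proof. intros Hf Hh. exact (filterlim_comp _ _ _ f h F _ _ Hf Hh). Qed.

Lemma filterlim_Rinv (f : T -> R) a :
  filterlim f F (locally a) -> a <> 0 -> filterlim (fun t => / f t) F (locally (/ a)).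
Proof.
  intros Hf Ha. apply (filterlim_continuous f Rinv a Hf).
  apply (continuous_Rinv_comp (fun x => x)); [apply continuous_id | exact Ha].
Qed.

Lemma filterlim_Cplus (f g : T -> C) a b :
  filterlim f F (locally a) -> filterlim g F (locally b) ->
  filterlim (fun t => (f t + g t)%C) F (locally (a + b)%C).
Proof.
  intros Hf Hg. exact (filterlim_comp_2 f g Cplus Hf Hg (@filterlim_plus _ C_R_NormedModule a b)).
Qed.

Lemma filterlim_Copp (f : T -> C) a :
  filterlim f F (locally a) -> filterlim (fun t => (- f t)%C) F (locally (- a)%C).
Proof.
  intros Hf. exact (filterlim_comp _ _ _ f Copp F _ _ Hf (@filterlim_opp _ C_R_NormedModule a)).
Qed.

Lemma filterlim_Cminus (f g : T -> C) a b :
  filterlim f F (locally a) -> filterlim g F (locally b) ->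
  filterlim (fun t => (f t - g t)%C) F (locally (a - b)%C).
Proof. intros Hf Hg. apply filterlim_Cplus; [|apply filterlim_Copp]; assumption. Qed.

Lemma filterlim_Cmult (f g : T -> C) a b :
  filterlim f F (locally a) -> filterlim g F (locally b) ->
  filterlim (fun t => (f t * g t)%C) F (locally (a * b)%C).
Proof.
  intros Hf Hg.
  pose proof (filterlim_fst _ _ Hf). pose proof (filterlim_snd _ _ Hf).
  pose proof (filterlim_fst _ _ Hg). pose proof (filterlim_snd _ _ Hg).
  apply filterlim_C; unfold_C.
  - apply filterlim_Rminus; apply filterlim_Rmult; assumption.
  - apply filterlim_Rplus; apply filterlim_Rmult; assumption.
Qed.

Lemma filterlim_Cexp (f : T -> C) a :
  filterlim f F (locally a) -> filterlim (fun t => Cexp (f t)) F (locally (Cexp a)).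
Proof.
  intros Hf.
  pose proof (filterlim_continuous _ exp _ (filterlim_fst _ _ Hf) (continuous_exp _)).
  pose proof (filterlim_continuous _ cos _ (filterlim_snd _ _ Hf) (continuous_cos _)).
  pose proof (filterlim_continuous _ sin _ (filterlim_snd _ _ Hf) (continuous_sin _)).
  apply filterlim_C; unfold_C; apply filterlim_Rmult; assumption.
Qed.

Lemma filterlim_Cinv (f : T -> C) a :
  filterlim f F (locally a) -> a <> RtoC 0 -> filterlim (fun t => (/ f t)%C) F (locally (/ a)%C).
Proof.
  intros Hf Ha.
  pose proof (filterlim_fst _ _ Hf) as H1. pose proof (filterlim_snd _ _ Hf) as H2.
  assert (Hn : fst a ^ 2 + snd a ^ 2 <> 0).
  { destruct a as [a1 a2]. intros E. apply Ha. unfold RtoC; simpl in *. f_equal; nra. }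
  assert (Hsq := filterlim_Rinv _ _ (filterlim_Rplus _ _ _ _
     (filterlim_Rmult _ _ _ _ H1 (filterlim_Rmult _ _ _ _ H1 (filterlim_const 1)))
     (filterlim_Rmult _ _ _ _ H2 (filterlim_Rmult _ _ _ _ H2 (filterlim_const 1)))) Hn).
  apply filterlim_C; unfold_C; unfold Rdiv.
  - apply filterlim_Rmult; assumption.
  - apply filterlim_Rmult; [apply filterlim_Ropp|]; assumption.
Qed.

End Limits.

Lemma continuous_C_fst (g : R -> C) x : continuous g x -> continuity_pt (fun t => fst (g t)) x.
Proof. intros H. apply continuity_pt_filterlim, filterlim_fst, H. Qed.

Lemma continuous_C_snd (g : R -> C) x : continuous g x -> continuity_pt (fun t => snd (g t)) x.
Proof. intros H. apply continuity_pt_filterlim, filterlim_snd, H. Qed.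

Lemma C_eq_of_derive_0 (g : R -> C) (a b : R) : a < b ->
  (forall x, a < x < b -> is_derive g x (RtoC 0)) ->
  (forall x, a <= x <= b -> continuous g x) -> g a = g b.
Proof.
  intros Hab Hd Hc.
  assert (Hconst : forall h : R -> R, (forall x, a < x < b -> is_derive h x 0) ->
            (forall x, a <= x <= b -> continuity_pt h x) -> h a = h b).
  { intros h Hh Hhc. destruct (MVT_gen h a b (fun _ => 0)) as [c [_ E]]; [ | | lra].
    all: rewrite Rmin_left, Rmax_right by lra; assumption. }
  apply injective_projections;
    [apply (Hconst (fun t => fst (g t))) | apply (Hconst (fun t => snd (g t)))]; intros x Hx.
  - exact (is_derive_fst _ _ _ (Hd x Hx)).
  - apply continuous_C_fst, Hc, Hx.
  - exact (is_derive_snd _ _ _ (Hd x Hx)).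
  - apply continuous_C_snd, Hc, Hx.
Qed.

Lemma continuous_eq_right (f g : R -> C) (d : R) :
  continuous f d -> continuous g d -> (forall x, d < x -> f x = g x) -> f d = g d.
Proof.
  intros Hf Hg E.
  assert (Hright : forall h : R -> C, continuous h d ->
            filterlim h (at_right d) (locally (h d))).
  { intros h Hh P HP. destruct (Hh P HP) as [eps He]. exists eps. intros y Hy _. exact (He y Hy). }
  apply (@filterlim_locally_unique _ R_AbsRing C_R_NormedModule _
           (Proper_StrongProper _ (at_right_proper_filter d)) f); [apply Hright, Hf|].
  apply (filterlim_ext_loc g); [|apply Hright, Hg].
  exists (mkposreal 1 Rlt_0_1). intros y _ Hy. symmetry. exact (E y Hy).
Qed.

(** * Complex exponential and square root *)

Lemma Ci_sq : (Ci * Ci)%C = Copp (RtoC 1).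
Proof. unfold Ci, RtoC. unfold_C. f_equal; ring. Qed.

Lemma Cexp_add (a b : C) : Cexp (a + b) = (Cexp a * Cexp b)%C.
Proof.
  destruct a as [a1 a2], b as [b1 b2]. unfold_C.
  rewrite exp_plus, cos_plus, sin_plus. f_equal; ring.
Qed.

Lemma Cmod_Cexp (z : C) : Cmod (Cexp z) = exp (fst z).
Proof.
  destruct z as [x y]. unfold Cmod, Cexp, Re, Im; simpl.
  replace (exp x * cos y * (exp x * cos y * 1) + exp x * sin y * (exp x * sin y * 1))
    with (exp x * exp x) by (pose proof (sin2_cos2 y); unfold Rsqr in *; nra).
  apply sqrt_square. left; apply exp_pos.
Qed.

Definition Cexpi (t : R) (z : C) : C := Cexp (Cmult (0, t) z).

Lemma Cexpi_add (s t : R) (z : C) : Cexpi (s + t) z = (Cexpi s z * Cexpi t z)%C.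
Proof. unfold Cexpi. rewrite <- Cexp_add. f_equal. destruct z. unfold_C. f_equal; ring. Qed.

Lemma Cexpi_0_l (z : C) : Cexpi 0 z = RtoC 1.
Proof.
  unfold Cexpi, RtoC. destruct z. unfold_C.
  rewrite !Rmult_0_l, Rminus_0_r, Rplus_0_l, exp_0, cos_0, sin_0. f_equal; ring.
Qed.

Lemma Cexpi_0_r (t : R) : Cexpi t (RtoC 0) = RtoC 1.
Proof.
  unfold Cexpi, RtoC. unfold_C.
  rewrite !Rmult_0_r, Rminus_0_r, Rplus_0_l, exp_0, cos_0, sin_0. f_equal; ring.
Qed.

Lemma Cexpi_opp_opp (t : R) (z : C) : Cexpi (- t) (- z)%C = Cexpi t z.
Proof. unfold Cexpi. f_equal. destruct z. unfold_C. f_equal; ring. Qed.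

Lemma is_derive_Cexpi (z : C) (x : R) :
  is_derive (fun t => Cexpi t z) x (Ci * z * Cexpi x z)%C.
Proof.
  assert (E : forall t, ((0, t) * z)%C = (Ci * z * RtoC t)%C).
  { intros t. destruct z. unfold Ci, RtoC. unfold_C. f_equal; ring. }
  unfold Cexpi. rewrite E.
  apply (is_derive_ext (fun t => Cexp (Ci * z * RtoC t)%C)); [intros t; rewrite E; reflexivity|].
  apply is_derive_Cexp_lin.
Qed.

Lemma is_derive_Cexpi_ray (s : R) (w : C) (x : R) :
  is_derive (fun t => Cexpi s (RtoC t * w)%C) x (Ci * RtoC s * w * Cexpi s (RtoC x * w))%C.
Proof.
  assert (E : forall t, ((0, s) * (RtoC t * w))%C = (Ci * RtoC s * w * RtoC t)%C).
  { intros t. unfold Ci, RtoC. destruct w. unfold_C. f_equal; ring. }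
  unfold Cexpi. rewrite E.
  apply (is_derive_ext (fun t => Cexp (Ci * RtoC s * w * RtoC t)%C));
    [intros t; rewrite E; reflexivity|].
  apply is_derive_Cexp_lin.
Qed.

Lemma Cexpi_real (t m : R) : Cexpi t (RtoC m) = (cos (t * m), sin (t * m)).
Proof.
  unfold Cexpi, RtoC. unfold_C. rewrite !Rmult_0_r, !Rmult_0_l, Rminus_0_r, Rplus_0_l, exp_0.
  f_equal; ring.
Qed.

Lemma Cexpi_imag (t b : R) : Cexpi t (0, b) = RtoC (exp (- (t * b))).
Proof.
  unfold Cexpi, RtoC. unfold_C. rewrite !Rmult_0_r, !Rmult_0_l, Rplus_0_r, Rminus_0_l, cos_0, sin_0.
  f_equal; ring.
Qed.

Lemma Rabs_le_Cmod (a b : R) : Rabs a <= Cmod (a, b).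
Proof.
  unfold Cmod; simpl. rewrite <- sqrt_Rsqr_abs. apply sqrt_le_1_alt. unfold Rsqr. nra.
Qed.

Lemma Csqrt_sqr (a b : R) : 0 <= b -> (Csqrt (a, b) * Csqrt (a, b))%C = (a, b).
Proof.
  intros Hb. unfold Csqrt; simpl.
  destruct (Rle_dec 0 b) as [_|]; [|lra].
  pose proof (Rabs_le_Cmod a b) as Hr. pose proof (Rle_abs a). pose proof (Rle_abs (- a)).
  rewrite Rabs_Ropp in *.
  set (r := Cmod (a, b)) in *.
  assert (Hr2 : r * r = a * a + b * b).
  { unfold r, Cmod; simpl. rewrite sqrt_sqrt; [ring|nra]. }
  unfold_C. rewrite !Rmult_1_l. f_equal.
  - rewrite !sqrt_sqrt by lra. field.
  - rewrite (Rmult_comm (sqrt ((r - a) / 2))), <- sqrt_mult_alt by lra.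
    replace ((r + a) / 2 * ((r - a) / 2)) with (b / 2 * (b / 2)) by (field_simplify; nra).
    rewrite sqrt_square by lra. field.
Qed.

Lemma Csqrt_Im_pos (a b : R) : 0 < b -> 0 < snd (Csqrt (a, b)).
Proof.
  intros Hb. unfold Csqrt; simpl. destruct (Rle_dec 0 b); [|lra].
  rewrite Rmult_1_l. apply sqrt_lt_R0.
  assert (Rabs a < Cmod (a, b)).
  { unfold Cmod; simpl. rewrite <- sqrt_Rsqr_abs. apply sqrt_lt_1_alt. unfold Rsqr. split; nra. }
  pose proof (Rle_abs a). lra.
Qed.

Lemma Csqrt_Re_nonneg (a b : R) : 0 <= fst (Csqrt (a, b)).
Proof. apply sqrt_pos. Qed.

(** * The Wronskian for positive delta *)

Lemma first_integral (u u' : R -> C) (c m : C) (a b : R) : a < b ->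
  (forall x, is_derive u x (u' x)) -> (forall x, continuous u' x) ->
  (forall x, a < x < b -> is_derive u' x (- (c * u x))%C) -> (m * m)%C = c ->
  ((u' a + Ci * m * u a) * Cexpi (- a) m)%C = ((u' b + Ci * m * u b) * Cexpi (- b) m)%C.
Proof.
  intros Hab Hu Hu' Hc Hm.
  assert (HE : forall x, is_derive (fun t => Cexpi (- t) m) x (- (Ci * m * Cexpi (- x) m))%C).
  { intros x. apply (is_derive_comp_opp (fun t => Cexpi t m)), is_derive_Cexpi. }
  apply (C_eq_of_derive_0 (fun t => (u' t + Ci * m * u t) * Cexpi (- t) m)%C); [exact Hab| |].
  - intros x Hx.
    (* (u' + i m u)' = - c u + i m u' = i m (u' + i m u) as m * m = c, which cancels the
       derivative of e^(- i m x) *)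
    replace (RtoC 0) with ((- (c * u x) + (RtoC 0 * u x + Ci * m * u' x)) * Cexpi (- x) m
                           + (u' x + Ci * m * u x) * - (Ci * m * Cexpi (- x) m))%C.
    + apply is_derive_Cmult; [|exact (HE x)].
      apply is_derive_Cplus; [exact (Hc x Hx)|].
      apply is_derive_Cmult; [apply is_derive_Cconst | exact (Hu x)].
    + rewrite <- Hm. ring [Ci_sq].
  - intros x _. apply filterlim_Cmult.
    + apply filterlim_Cplus; [apply Hu'|].
      apply filterlim_Cmult; [apply filterlim_const|].
      exact (continuous_of_is_derive_C _ _ _ (Hu x)).
    + exact (continuous_of_is_derive_C _ _ _ (HE x)).
Qed.

Lemma q_even k1 k2 d x : q k1 k2 d (- x) = q k1 k2 d x.
Proof.
  unfold q.
  destruct (Rle_dec (- d) (- x)), (Rle_dec (- x) d), (Rle_dec (- d) x), (Rle_dec x d);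
    reflexivity || lra.
Qed.

Lemma coef_inside k1 k2 d xi delta x : - d <= x <= d ->
  coef k1 k2 d xi delta x = (k2 ^ 2 - xi ^ 2, delta).
Proof.
  intros Hx. unfold coef, q.
  destruct (Rle_dec (- d) x); [|lra]. destruct (Rle_dec x d); [|lra]. f_equal; ring.
Qed.

Lemma u_plus_at_d k1 k2 d xi delta u u' : is_u_plus k1 k2 d xi delta u u' ->
  u d = Cexpi d (kappa k1 xi delta) /\
  u' d = (Ci * kappa k1 xi delta * Cexpi d (kappa k1 xi delta))%C.
Proof.
  intros [[Hu [Hu' _]] Hext]. set (ka := kappa k1 xi delta).
  assert (Hwave := fun x => continuous_of_is_derive_C _ _ _ (is_derive_Cexpi ka x)).
  assert (Hd' : forall x, d < x -> u' x = (Ci * ka * Cexpi x ka)%C).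
  { intros x Hx. apply (is_derive_C_unique u x); [apply Hu|].
    apply (is_derive_ext_loc (fun t => Cexpi t ka)); [|apply is_derive_Cexpi].
    apply (locally_interval _ x d p_infty); [exact Hx | exact I |].
    intros y Hy _. symmetry. exact (Hext y Hy). }
  split.
  - apply (continuous_eq_right u (fun t => Cexpi t ka)); [|apply Hwave | exact Hext].
    exact (continuous_of_is_derive_C _ _ _ (Hu d)).
  - apply (continuous_eq_right u' (fun t => Ci * ka * Cexpi t ka)%C); [apply Hu' | | exact Hd'].
    apply filterlim_Cmult; [apply filterlim_const | apply Hwave].
Qed.

Lemma u_plus_first_integral k1 k2 d xi delta u u' (m : C) : 0 < d ->
  is_u_plus k1 k2 d xi delta u u' -> (m * m)%C = (k2 ^ 2 - xi ^ 2, delta) ->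
  (u' 0 + Ci * m * u 0)%C =
  (Ci * (kappa k1 xi delta + m) * Cexpi d (kappa k1 xi delta) * Cexpi (- d) m)%C.
Proof.
  intros hd Hp Hm. destruct (u_plus_at_d _ _ _ _ _ _ _ Hp) as [Eu Eu'].
  destruct Hp as [[Hu [Hu' Hi]] _].
  assert (Hin : forall x, 0 < x < d ->
            is_derive u' x (- (((k2 ^ 2 - xi ^ 2)%R, delta) * u x))%C).
  { intros x Hx. rewrite <- (coef_inside k1 k2 d xi delta x) by lra. apply Hi; lra. }
  assert (Hint := first_integral u u' _ m 0 d hd Hu Hu' Hin Hm).
  rewrite Ropp_0, Cexpi_0_l, Eu, Eu', Cmult_1_r in Hint.
  rewrite Hint. ring.
Qed.

Lemma u_plus_Cauchy_data k1 k2 d xi delta u u' : 0 < d -> 0 < delta ->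
  is_u_plus k1 k2 d xi delta u u' ->
  let ka := kappa k1 xi delta in let mu := Csqrt (k2 ^ 2 - xi ^ 2, delta) in
  u 0 = (Cexpi d ka * ((ka + mu) * Cexpi (- d) mu - (ka - mu) * Cexpi d mu)
         / (2 * mu))%C /\
  u' 0 = (Ci * Cexpi d ka * ((ka + mu) * Cexpi (- d) mu + (ka - mu) * Cexpi d mu)
          / 2)%C.
Proof.
  intros hd hdel Hp ka mu.
  assert (Hmu : (mu * mu)%C = (k2 ^ 2 - xi ^ 2, delta)) by (apply Csqrt_sqr; lra).
  assert (Hmu0 : mu <> RtoC 0).
  { intros E. pose proof (Csqrt_Im_pos (k2 ^ 2 - xi ^ 2) delta hdel) as H.
    fold mu in H. rewrite E in H. simpl in H. lra. }
  assert (Hplus := u_plus_first_integral _ _ _ _ _ _ _ mu hd Hp Hmu).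
  assert (Hminus := u_plus_first_integral _ _ _ _ _ _ _ (Copp mu) hd Hp
                      ltac:(rewrite <- Hmu; ring)).
  rewrite Cexpi_opp_opp in Hminus. fold ka in Hplus, Hminus.
  split.
  - transitivity (((u' 0 + Ci * mu * u 0) - (u' 0 + Ci * Copp mu * u 0)) / (2 * Ci * mu))%C.
    + field; auto using Ci_nz.
    + rewrite Hplus, Hminus. field; auto using Ci_nz.
  - transitivity (((u' 0 + Ci * mu * u 0) + (u' 0 + Ci * Copp mu * u 0)) / 2)%C.
    + field; auto using Ci_nz.
    + rewrite Hplus, Hminus. field; auto using Ci_nz.
Qed.

Lemma u_minus_reflected k1 k2 d xi delta um um' :
  is_u_minus k1 k2 d xi delta um um' ->
  is_u_plus k1 k2 d xi delta (fun x => um (- x)) (fun x => Copp (um' (- x))).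
Proof.
  intros [[Hu [Hu' Hi]] Hext]. split; [split; [|split]|].
  - intros x. apply (is_derive_comp_opp um), Hu.
  - intros x. apply filterlim_Copp.
    apply (filterlim_comp _ _ _ (fun t => - t) um' (locally x) (locally (- x))); [|apply Hu'].
    apply (continuous_opp (fun t => t) x), continuous_id.
  - intros x H1 H2.
    (* one sign from the outer negation, one from the chain rule for [- x] *)
    replace (- (coef k1 k2 d xi delta x * um (- x)%R))%C
      with (- - - (coef k1 k2 d xi delta (- x)%R * um (- x)%R))%C.
    + apply (@is_derive_opp _ C_R_NormedModule). apply (is_derive_comp_opp um'), Hi; lra.
    + unfold coef. rewrite q_even. ring.
  - intros x Hx. rewrite Hext by lra. rewrite Ropp_involutive. reflexivity.
Qed.

Definition sin_ratio (d : R) (mu : C) : C :=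
  ((Cexpi (2 * d) mu - Cexpi (- (2 * d)) mu) / (2 * Ci * mu))%C.

(* The factor sin(2 d mu)/mu is a separate argument [s] so that the limit delta -> 0+
   can be taken also where mu -> 0, i.e. at xi^2 = k2^2, where s -> 2 d. *)
Definition Wform (d : R) (ka mu s : C) : C :=
  (Cexpi (2 * d) ka * ((mu * mu + ka * ka) * s
                       + Ci * ka * (Cexpi (2 * d) mu + Cexpi (- (2 * d)) mu)))%C.

Lemma Cexpi_double (t : R) (z : C) : Cexpi (2 * t) z = (Cexpi t z * Cexpi t z)%C.
Proof. rewrite <- Cexpi_add. f_equal. ring. Qed.

Lemma wronskian_formula k1 k2 d xi delta up up' um um' : 0 < d -> 0 < delta ->
  is_u_plus k1 k2 d xi delta up up' -> is_u_minus k1 k2 d xi delta um um' ->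
  let mu := Csqrt (k2 ^ 2 - xi ^ 2, delta) in
  wronskian um um' up up' 0 = Wform d (kappa k1 xi delta) mu (sin_ratio d mu).
Proof.
  intros hd hdel Hp Hm mu.
  destruct (u_plus_Cauchy_data _ _ _ _ _ _ _ hd hdel Hp) as [Eu Eu'].
  destruct (u_plus_Cauchy_data _ _ _ _ _ _ _ hd hdel (u_minus_reflected _ _ _ _ _ _ _ Hm))
    as [Ev Ev'].
  cbv beta in Ev, Ev'. rewrite Ropp_0 in Ev, Ev'. fold mu in Eu, Eu', Ev, Ev'.
  assert (Hmu0 : mu <> RtoC 0).
  { intros E. pose proof (Csqrt_Im_pos (k2 ^ 2 - xi ^ 2) delta hdel) as H.
    fold mu in H. rewrite E in H. simpl in H. lra. }
  (* u_-(-x) has the Cauchy data of u_+, so the Wronskian is 2 u_+(0) u_+'(0) *)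
  unfold wronskian, Wform, sin_ratio.
  replace (um' 0) with (- - um' 0)%C by ring.
  rewrite Ev, Ev', Eu, Eu'.
  replace (- (2 * d)) with (2 * - d) by ring. rewrite !Cexpi_double.
  field [Ci_sq]. auto using Ci_nz.
Qed.

Lemma Cmod_Cexpi (t : R) (z : C) : Cmod (Cexpi t z) = exp (- (t * snd z)).
Proof. unfold Cexpi. rewrite Cmod_Cexp. f_equal. destruct z; simpl; ring. Qed.

Lemma Cexpi_neq0 (t : R) (z : C) : Cexpi t z <> RtoC 0.
Proof.
  intros E. pose proof (exp_pos (- (t * snd z))) as H.
  rewrite <- Cmod_Cexpi, E, Cmod_0 in H. lra.
Qed.

Lemma Cmod_sub_lt_add (a b : C) : 0 <= fst a -> 0 < snd a -> 0 <= fst b -> 0 < snd b ->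
  Cmod (a - b) < Cmod (a + b).
Proof.
  destruct a as [x y], b as [z w]; simpl; intros Hx Hy Hz Hw.
  unfold Cmod. unfold_C. apply sqrt_lt_1_alt. rewrite !Rmult_1_r.
  split; [|nra]. apply Rplus_le_le_0_compat; apply Rle_0_sqr.
Qed.

Lemma Wform_factor (d : R) (ka mu : C) : mu <> RtoC 0 ->
  Wform d ka mu (sin_ratio d mu) =
  (Cexpi (2 * d) ka * ((ka - mu) * (ka - mu) * Cexpi (2 * d) mu
                       - (ka + mu) * (ka + mu) * Cexpi (- (2 * d)) mu) / (2 * Ci * mu))%C.
Proof.
  intros Hmu. unfold Wform, sin_ratio.
  field [Ci_sq]. auto using Ci_nz.
Qed.

Lemma Wform_neq0 (d : R) (ka mu : C) : 0 < d ->
  0 <= fst ka -> 0 < snd ka -> 0 <= fst mu -> 0 < snd mu ->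
  Wform d ka mu (sin_ratio d mu) <> RtoC 0.
Proof.
  intros hd Hk1 Hk2 Hm1 Hm2 E.
  assert (Hmu : mu <> RtoC 0) by (intros Q; rewrite Q in Hm2; simpl in Hm2; lra).
  assert (He := Cexpi_neq0 (2 * d) ka).
  rewrite Wform_factor in E by exact Hmu.
  set (A := Cexpi (2 * d) mu) in E. set (B := Cexpi (- (2 * d)) mu) in E.
  assert (Hbal : ((ka - mu) * (ka - mu) * A)%C = ((ka + mu) * (ka + mu) * B)%C).
  { apply Ceq_minus.
    transitivity (Cexpi (2 * d) ka * ((ka - mu) * (ka - mu) * A - (ka + mu) * (ka + mu) * B)
                  / (2 * Ci * mu) * (2 * Ci * mu) / Cexpi (2 * d) ka)%C.
    - field. auto using Ci_nz.
    - rewrite E. field. auto using Ci_nz. }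
  apply (f_equal Cmod) in Hbal. rewrite !Cmod_mult in Hbal. unfold A, B in Hbal.
  rewrite !Cmod_Cexpi in Hbal.
  assert (HA : exp (- (2 * d * snd mu)) < 1) by (rewrite <- exp_0; apply exp_increasing; nra).
  assert (HB : 1 < exp (- (- (2 * d) * snd mu))) by (rewrite <- exp_0; apply exp_increasing; nra).
  pose proof (Cmod_sub_lt_add ka mu Hk1 Hk2 Hm1 Hm2). pose proof (Cmod_ge_0 (ka - mu)).
  pose proof (exp_pos (- (2 * d * snd mu))).
  nra.
Qed.

Lemma wronskian_neq0 k1 k2 d xi delta up up' um um' : 0 < d -> 0 < delta ->
  is_u_plus k1 k2 d xi delta up up' -> is_u_minus k1 k2 d xi delta um um' ->
  wronskian um um' up up' 0 <> RtoC 0.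
Proof.
  intros hd hdel Hp Hm. rewrite (wronskian_formula k1 k2 d xi delta) by assumption.
  apply Wform_neq0; try apply Csqrt_Re_nonneg; try apply Csqrt_Im_pos; assumption.
Qed.

(** * The limit delta -> 0+ *)

Definition Csqrt0 (a : R) : C := (sqrt ((Rabs a + a) / 2), sqrt ((Rabs a - a) / 2)).

Lemma Csqrt0_nonneg (a : R) : 0 <= a -> Csqrt0 a = RtoC (sqrt a).
Proof.
  intros H. unfold Csqrt0, RtoC. rewrite Rabs_pos_eq by exact H. f_equal.
  - f_equal. field.
  - replace ((a - a) / 2) with 0 by field. apply sqrt_0.
Qed.

Lemma Csqrt0_neg (a : R) : a < 0 -> Csqrt0 a = (0, sqrt (- a)).
Proof.
  intros H. unfold Csqrt0. rewrite Rabs_left by exact H. f_equal.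
  - replace ((- a + a) / 2) with 0 by field. apply sqrt_0.
  - f_equal. field.
Qed.

Lemma Csqrt0_neq0 (a : R) : a <> 0 -> Csqrt0 a <> RtoC 0.
Proof.
  intros H E. destruct (Rlt_or_le a 0) as [Hl|Hl].
  - rewrite Csqrt0_neg in E by exact Hl. injection E as E. pose proof (sqrt_lt_R0 (- a)). lra.
  - rewrite Csqrt0_nonneg in E by exact Hl. injection E as E. pose proof (sqrt_lt_R0 a). lra.
Qed.

Lemma filterlim_at_right_id (x : R) : filterlim (fun t => t) (at_right x) (locally x).
Proof. intros P [eps HP]. exists eps. intros y Hy _. exact (HP y Hy). Qed.

Lemma Csqrt_at_right (a : R) :
  filterlim (fun delta => Csqrt (a, delta)) (at_right 0) (locally (Csqrt0 a)).
Proof.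
  set (h := fun s : R => sqrt (a ^ 2 + s ^ 2)).
  apply (filterlim_ext_loc (fun delta => (sqrt ((h delta + a) / 2), sqrt ((h delta - a) / 2)))).
  { exists (mkposreal 1 Rlt_0_1). intros y _ Hy. unfold Csqrt, Cmod; simpl.
    destruct (Rle_dec 0 y); [|lra]. rewrite Rmult_1_l. reflexivity. }
  assert (Hh : filterlim h (at_right 0) (locally (Rabs a))).
  { rewrite <- sqrt_Rsqr_abs. replace (Rsqr a) with (a ^ 2 + 0 ^ 2) by (unfold Rsqr; ring).
    unfold h. apply (filterlim_continuous (fun s => a ^ 2 + s ^ 2)); [|apply continuous_sqrt].
    apply filterlim_Rplus; [apply filterlim_const|]. simpl.
    pose proof (filterlim_at_right_id 0).
    apply filterlim_Rmult; [|apply filterlim_Rmult; [|apply filterlim_const]]; assumption. }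
  apply filterlim_C; simpl; (apply filterlim_continuous; [|apply continuous_sqrt]);
    unfold Rdiv; (apply filterlim_Rmult; [|apply filterlim_const]).
  - apply filterlim_Rplus; [exact Hh | apply filterlim_const].
  - apply filterlim_Rminus; [exact Hh | apply filterlim_const].
Qed.

Lemma filterlim_difference_quotient (f : R -> C) (l : C) : is_derive f 0 l -> f 0 = RtoC 0 ->
  filterlim (fun s => (f s * RtoC (/ s))%C) (at_right 0) (locally l).
Proof.
  intros H H0.
  assert (Hq : forall g : R -> R, forall m, is_derive g 0 m -> g 0 = 0 ->
            filterlim (fun s => g s / s) (at_right 0) (locally m)).
  { intros g m Hg Hg0. apply is_derive_Reals in Hg.
    intros P [eps HP]. destruct (Hg eps (cond_pos eps)) as [del Hdel].
    exists del. intros y Hy Hpos. apply HP.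
    assert (Hy' : Rabs y < del).
    { unfold ball in Hy; simpl in Hy. unfold AbsRing_ball, abs, minus, plus, opp in Hy; simpl in Hy.
      rewrite Ropp_0, Rplus_0_r in Hy. exact Hy. }
    specialize (Hdel y ltac:(lra) Hy'). rewrite Rplus_0_l, Hg0, Rminus_0_r in Hdel. exact Hdel. }
  apply filterlim_C.
  - apply (filterlim_ext (fun s => fst (f s) / s)); [intros s; unfold_C; unfold Rdiv; ring|].
    apply Hq; [exact (is_derive_fst _ _ _ H) | rewrite H0; reflexivity].
  - apply (filterlim_ext (fun s => snd (f s) / s)); [intros s; unfold_C; unfold Rdiv; ring|].
    apply Hq; [exact (is_derive_snd _ _ _ H) | rewrite H0; reflexivity].
Qed.

Lemma sin_ratio_along_ray (d : R) (w : C) : w <> RtoC 0 ->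
  filterlim (fun t => sin_ratio d (RtoC t * w)%C) (at_right 0) (locally (RtoC (2 * d))).
Proof.
  intros Hw.
  set (g := fun t : R => (Cexpi (2 * d) (RtoC t * w) - Cexpi (- (2 * d)) (RtoC t * w))%C).
  assert (Hg : is_derive g 0 (RtoC 4 * Ci * RtoC d * w)%C).
  { replace (RtoC 4 * Ci * RtoC d * w)%C
      with (Ci * RtoC (2 * d) * w * Cexpi (2 * d) (RtoC 0 * w)
            - Ci * RtoC (- (2 * d)) * w * Cexpi (- (2 * d)) (RtoC 0 * w))%C.
    - apply is_derive_Cplus;
        [|apply (@is_derive_opp _ C_R_NormedModule)]; apply is_derive_Cexpi_ray.
    - rewrite Cmult_0_l, !Cexpi_0_r, !RtoC_mult, RtoC_opp, RtoC_mult. ring. }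
  assert (Hg0 : g 0 = RtoC 0) by (unfold g; rewrite Cmult_0_l, !Cexpi_0_r; ring).
  apply (filterlim_ext_loc (fun t => (g t * RtoC (/ t)) / (2 * Ci * w))%C).
  - exists (mkposreal 1 Rlt_0_1). intros t _ Ht.
    assert (Ht' : RtoC t <> RtoC 0) by (intros E; injection E; lra).
    unfold sin_ratio, g. rewrite RtoC_inv by lra. field. auto using Ci_nz.
  - replace (RtoC (2 * d)) with (RtoC 4 * Ci * RtoC d * w / (2 * Ci * w))%C
      by (rewrite RtoC_mult; field; auto using Ci_nz).
    apply filterlim_Cmult; [|apply filterlim_const].
    exact (filterlim_difference_quotient g _ Hg Hg0).
Qed.

Section LimitsWform.
Context {T : Type} {F : (T -> Prop) -> Prop} {FF : Filter F}.

Lemma filterlim_Cexpi (t : R) (f : T -> C) (z : C) :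
  filterlim f F (locally z) -> filterlim (fun x => Cexpi t (f x)) F (locally (Cexpi t z)).
Proof. intros H. apply filterlim_Cexp, filterlim_Cmult; [apply filterlim_const | exact H]. Qed.

Lemma filterlim_sin_ratio (d : R) (f : T -> C) (z : C) :
  filterlim f F (locally z) -> z <> RtoC 0 ->
  filterlim (fun x => sin_ratio d (f x)) F (locally (sin_ratio d z)).
Proof.
  intros H Hz. unfold sin_ratio, Cdiv.
  apply filterlim_Cmult; [apply filterlim_Cminus; apply filterlim_Cexpi; exact H|].
  apply filterlim_Cinv; [apply filterlim_Cmult; [apply filterlim_const | exact H]|].
  apply Cmult_neq_0; [apply Cmult_neq_0|]; [intros E; injection E; lra.. | exact Hz].
Qed.

Lemma filterlim_Wform (d : R) (k m s : T -> C) (k0 m0 s0 : C) :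
  filterlim k F (locally k0) -> filterlim m F (locally m0) -> filterlim s F (locally s0) ->
  filterlim (fun x => Wform d (k x) (m x) (s x)) F (locally (Wform d k0 m0 s0)).
Proof.
  intros Hk Hm Hs. unfold Wform.
  apply filterlim_Cmult; [apply filterlim_Cexpi, Hk|].
  apply filterlim_Cplus.
  - apply filterlim_Cmult; [|exact Hs].
    apply filterlim_Cplus; apply filterlim_Cmult; assumption.
  - apply filterlim_Cmult; [apply filterlim_Cmult; [apply filterlim_const | exact Hk]|].
    apply filterlim_Cplus; apply filterlim_Cexpi, Hm.
Qed.

Lemma filterlim_at_right_of_pos (s : T -> R) :
  filterlim s F (locally 0) -> F (fun x => 0 < s x) -> filterlim s F (at_right 0).
Proof.
  intros H Hp P [eps HP]. unfold filtermap.
  apply (filter_imp (fun x => ball 0 eps (s x) /\ 0 < s x)).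
  - intros x [A B]. exact (HP _ A B).
  - apply filter_and; [exact (H (ball 0 eps) (locally_ball 0 eps)) | exact Hp].
Qed.

End LimitsWform.

Definition sin_ratio0 (d a : R) : C :=
  if Req_EM_T a 0 then RtoC (2 * d) else sin_ratio d (Csqrt0 a).

Lemma sin_ratio_at_right (d a : R) :
  filterlim (fun delta => sin_ratio d (Csqrt (a, delta))) (at_right 0) (locally (sin_ratio0 d a)).
Proof.
  unfold sin_ratio0. destruct (Req_EM_T a 0) as [->|Ha].
  - set (s := fun delta => fst (Csqrt (0, delta))).
    assert (Hray : forall delta, 0 <= delta -> Csqrt (0, delta) = (RtoC (s delta) * (1, 1))%C).
    { intros delta Hd. unfold s, Csqrt, RtoC; simpl. destruct (Rle_dec 0 delta); [|lra].
      rewrite Rplus_0_r, Rminus_0_r. unfold_C. f_equal; ring. }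
    assert (Hs : filterlim s (at_right 0) (at_right 0)).
    { apply filterlim_at_right_of_pos.
      - replace 0 with (fst (Csqrt0 0)) at 2
          by (rewrite Csqrt0_nonneg, sqrt_0 by lra; reflexivity).
        apply filterlim_fst, Csqrt_at_right.
      - exists (mkposreal 1 Rlt_0_1). intros delta _ Hd.
        unfold s. rewrite Hray by lra. simpl. rewrite Rmult_1_r, Rmult_0_l, Rminus_0_r.
        pose proof (Csqrt_Im_pos 0 delta Hd) as H. rewrite Hray in H by lra. simpl in H. lra. }
    apply (filterlim_ext_loc (fun delta => sin_ratio d (RtoC (s delta) * (1, 1))%C)).
    + exists (mkposreal 1 Rlt_0_1). intros delta _ Hd. rewrite Hray by lra. reflexivity.
    + apply (filterlim_comp _ _ _ s (fun t => sin_ratio d (RtoC t * (1, 1))%C) _ (at_right 0));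
        [exact Hs | apply sin_ratio_along_ray]. intros E. injection E. lra.
  - apply filterlim_sin_ratio; [apply Csqrt_at_right | apply Csqrt0_neq0, Ha].
Qed.

Definition W0 (k1 k2 d xi : R) : C :=
  Wform d (Csqrt0 (k1 ^ 2 - xi ^ 2)) (Csqrt0 (k2 ^ 2 - xi ^ 2)) (sin_ratio0 d (k2 ^ 2 - xi ^ 2)).

Lemma wronskian_limit k1 k2 d xi (up up' um um' : R -> R -> R -> C) : 0 < d ->
  (forall xi delta, 0 < delta -> is_u_plus k1 k2 d xi delta (up xi delta) (up' xi delta)) ->
  (forall xi delta, 0 < delta -> is_u_minus k1 k2 d xi delta (um xi delta) (um' xi delta)) ->
  filterlim (fun delta => wronskian (um xi delta) (um' xi delta) (up xi delta) (up' xi delta) 0)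
    (at_right 0) (locally (W0 k1 k2 d xi)).
Proof.
  intros hd Hp Hm.
  apply (filterlim_ext_loc (fun delta => Wform d (Csqrt (k1 ^ 2 - xi ^ 2, delta))
           (Csqrt (k2 ^ 2 - xi ^ 2, delta)) (sin_ratio d (Csqrt (k2 ^ 2 - xi ^ 2, delta))))).
  - exists (mkposreal 1 Rlt_0_1). intros delta _ Hd. symmetry.
    apply wronskian_formula; auto.
  - apply filterlim_Wform; [apply Csqrt_at_right | apply Csqrt_at_right | apply sin_ratio_at_right].
Qed.

(** * Zeros of the limiting Wronskian *)

Lemma sin_ratio_real (d m : R) : m <> 0 -> sin_ratio d (RtoC m) = RtoC (sin (2 * d * m) / m).
Proof.
  intros Hm. unfold sin_ratio. rewrite !Cexpi_real.
  replace (- (2 * d) * m) with (- (2 * d * m)) by ring. rewrite cos_neg, sin_neg.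
  unfold Ci, RtoC. unfold_C. f_equal; field; assumption.
Qed.

Lemma sin_ratio_imag (d b : R) : b <> 0 ->
  sin_ratio d (0, b) = RtoC ((exp (2 * d * b) - exp (- (2 * d * b))) / (2 * b)).
Proof.
  intros Hb. unfold sin_ratio. rewrite !Cexpi_imag.
  replace (- (- (2 * d) * b)) with (2 * d * b) by ring.
  unfold Ci, RtoC. unfold_C. f_equal; field; assumption.
Qed.

Lemma sin_eq_0_nat (x : R) : - PI < x -> sin x = 0 -> exists j : nat, x = INR j * PI.
Proof.
  intros Hx Hs. apply sin_eq_0_0 in Hs. destruct Hs as [k ->].
  assert (Hk : (0 <= k)%Z).
  { assert (-1 < IZR k) by (pose proof PI_RGT_0; nra). apply lt_IZR in H. lia. }
  exists (Z.to_nat k). rewrite INR_IZR_INZ, Z2Nat.id by exact Hk. reflexivity.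
Qed.

Lemma sin_sub_2atan (m g a : R) : 0 < m ->
  (m * m - g * g) * sin a - 2 * g * m * cos a = (m * m + g * g) * sin (a - 2 * atan (g / m)).
Proof.
  intros Hm. rewrite sin_minus, sin_2a, cos_2a, sin_atan, cos_atan.
  set (t := g / m).
  assert (Hg : g = t * m) by (unfold t; field; lra). clearbody t. subst g.
  assert (Hs : 0 < 1 + t²) by (unfold Rsqr; nra).
  assert (Hss : sqrt (1 + t²) ^ 2 = 1 + t²) by (rewrite <- Rsqr_pow2; apply Rsqr_sqrt; lra).
  assert (Hsp : 0 < sqrt (1 + t²)) by (apply sqrt_lt_R0; lra).
  field_simplify; [|lra]. rewrite Hss. unfold Rsqr in *. field. lra.
Qed.

Section Waveguide.
Variables k1 k2 d : R.
Hypothesis hk1 : 0 < k1.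
Hypothesis hk12 : k1 < k2.
Hypothesis hd : 0 < d.
Hypothesis hres : forall n : nat, (1 <= n)%nat -> 2 * d * sqrt (k2 ^ 2 - k1 ^ 2) <> INR n * PI.

Lemma W0_even xi : W0 k1 k2 d (- xi) = W0 k1 k2 d xi.
Proof. unfold W0. replace ((- xi) ^ 2) with (xi ^ 2) by ring. reflexivity. Qed.

Lemma is_derive_W0_opp x l : is_derive (W0 k1 k2 d) x l -> is_derive (W0 k1 k2 d) (- x) (- l)%C.
Proof.
  intros H. apply (is_derive_ext (fun t => W0 k1 k2 d (- t))); [intros t; apply W0_even|].
  apply (is_derive_comp_opp (W0 k1 k2 d)). rewrite Ropp_involutive. exact H.
Qed.

Lemma W0_radiating xi : xi ^ 2 <= k1 ^ 2 ->
  let c := sqrt (k1 ^ 2 - xi ^ 2) in let m := sqrt (k2 ^ 2 - xi ^ 2) in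
  W0 k1 k2 d xi = Cmult (cos (2 * d * c), sin (2 * d * c))
                   ((m * m + c * c) * (sin (2 * d * m) / m), 2 * c * cos (2 * d * m)).
Proof.
  intros H c m.
  assert (Hm : 0 < m) by (apply sqrt_lt_R0; nra).
  unfold W0, sin_ratio0. destruct (Req_EM_T (k2 ^ 2 - xi ^ 2) 0) as [E|_]; [nra|].
  rewrite !Csqrt0_nonneg by nra. fold c m.
  unfold Wform. rewrite sin_ratio_real, !Cexpi_real by lra.
  replace (- (2 * d) * m) with (- (2 * d * m)) by ring. rewrite cos_neg, sin_neg.
  unfold Ci, RtoC. unfold_C. f_equal; field; lra.
Qed.

Lemma W0_radiating_neq0 xi : xi ^ 2 <= k1 ^ 2 -> W0 k1 k2 d xi <> RtoC 0.
Proof.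
  intros H. rewrite W0_radiating by exact H.
  set (c := sqrt (k1 ^ 2 - xi ^ 2)). set (m := sqrt (k2 ^ 2 - xi ^ 2)).
  assert (Hm : 0 < m) by (apply sqrt_lt_R0; nra).
  assert (Hc : 0 <= c) by apply sqrt_pos.
  apply Cmult_neq_0.
  { intros E. injection E as E1 E2. exact (cos_sin_0 _ (conj E1 E2)). }
  intros E. injection E as E1 E2.
  assert (Hs : sin (2 * d * m) = 0).
  { assert (Hmc : 0 < m * m + c * c) by nra.
    apply Rmult_integral in E1 as [E1|E1]; [lra|].
    unfold Rdiv in E1. apply Rmult_integral in E1 as [E1|E1]; [exact E1|].
    exfalso. exact (Rinv_neq_0_compat m ltac:(lra) E1). }
  assert (Hc0 : c = 0).
  { apply Rmult_integral in E2 as [E2|E2]; [lra|]. exfalso. exact (cos_sin_0 _ (conj E2 Hs)). }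
  assert (Hx : k1 ^ 2 - xi ^ 2 = 0) by (apply sqrt_eq_0; [lra | exact Hc0]).
  replace m with (sqrt (k2 ^ 2 - k1 ^ 2)) in Hs, Hm by (unfold m; f_equal; lra).
  assert (Hpos : 0 < 2 * d * sqrt (k2 ^ 2 - k1 ^ 2)) by (apply Rmult_lt_0_compat; lra).
  assert (Hpi : - PI < 2 * d * sqrt (k2 ^ 2 - k1 ^ 2)) by (pose proof PI_RGT_0; lra).
  destruct (sin_eq_0_nat _ Hpi Hs) as [[|n] Hn].
  - simpl INR in Hn. lra.
  - apply (hres (S n)); [lia | exact Hn].
Qed.

Lemma W0_cutoff xi : xi ^ 2 = k2 ^ 2 ->
  let g := sqrt (xi ^ 2 - k1 ^ 2) in
  W0 k1 k2 d xi = RtoC (exp (- (2 * d * g)) * (- (g * g) * (2 * d) - 2 * g)).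
Proof.
  intros H g.
  unfold W0, sin_ratio0. destruct (Req_EM_T (k2 ^ 2 - xi ^ 2) 0) as [_|E]; [|lra].
  rewrite Csqrt0_neg by nra. replace (k2 ^ 2 - xi ^ 2) with 0 by lra.
  rewrite Csqrt0_nonneg, sqrt_0 by lra.
  replace (- (k1 ^ 2 - xi ^ 2)) with (xi ^ 2 - k1 ^ 2) by ring.
  fold g. unfold Wform. rewrite Cexpi_imag, !Cexpi_0_r.
  unfold Ci, RtoC. unfold_C. f_equal; field.
Qed.

Lemma W0_evanescent xi : k2 ^ 2 < xi ^ 2 ->
  let g := sqrt (xi ^ 2 - k1 ^ 2) in let b := sqrt (xi ^ 2 - k2 ^ 2) in
  W0 k1 k2 d xi = RtoC (exp (- (2 * d * g)) *
     (- (b * b + g * g) * ((exp (2 * d * b) - exp (- (2 * d * b))) / (2 * b))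
      - g * (exp (- (2 * d * b)) + exp (2 * d * b)))).
Proof.
  intros H g b.
  assert (Hb : 0 < b) by (apply sqrt_lt_R0; lra).
  unfold W0, sin_ratio0. destruct (Req_EM_T (k2 ^ 2 - xi ^ 2) 0) as [E|_]; [lra|].
  rewrite !Csqrt0_neg by nra.
  replace (- (k1 ^ 2 - xi ^ 2)) with (xi ^ 2 - k1 ^ 2) by ring.
  replace (- (k2 ^ 2 - xi ^ 2)) with (xi ^ 2 - k2 ^ 2) by ring. fold g b.
  unfold Wform. rewrite sin_ratio_imag, !Cexpi_imag by lra.
  replace (- (- (2 * d) * b)) with (2 * d * b) by ring.
  unfold Ci, RtoC. unfold_C. f_equal; field; lra.
Qed.

Lemma W0_outer_neq0 xi : k2 ^ 2 <= xi ^ 2 -> W0 k1 k2 d xi <> RtoC 0.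
Proof.
  intros H. set (g := sqrt (xi ^ 2 - k1 ^ 2)).
  assert (Hg : 0 < g) by (apply sqrt_lt_R0; nra).
  pose proof (exp_pos (- (2 * d * g))) as He.
  destruct H as [H|H].
  - rewrite W0_evanescent by exact H. fold g. set (b := sqrt (xi ^ 2 - k2 ^ 2)).
    assert (Hb : 0 < b) by (apply sqrt_lt_R0; lra).
    assert (Hgrow : exp (- (2 * d * b)) < exp (2 * d * b)) by (apply exp_increasing; nra).
    pose proof (exp_pos (- (2 * d * b))).
    assert (0 < (exp (2 * d * b) - exp (- (2 * d * b))) / (2 * b))
      by (apply Rdiv_lt_0_compat; lra).
    intros E. injection E as E. apply Rmult_integral in E as [E|E]; nra.
  - rewrite W0_cutoff by lra. fold g.
    intros E. injection E as E. apply Rmult_integral in E as [E|E]; nra.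
Qed.

Lemma W0_guided xi : k1 ^ 2 < xi ^ 2 < k2 ^ 2 ->
  let g := sqrt (xi ^ 2 - k1 ^ 2) in let m := sqrt (k2 ^ 2 - xi ^ 2) in
  W0 k1 k2 d xi = RtoC (exp (- (2 * d * g)) *
     ((m * m - g * g) * (sin (2 * d * m) / m) - 2 * g * cos (2 * d * m))).
Proof.
  intros H g m.
  assert (Hm : 0 < m) by (apply sqrt_lt_R0; lra).
  unfold W0, sin_ratio0. destruct (Req_EM_T (k2 ^ 2 - xi ^ 2) 0) as [E|_]; [lra|].
  rewrite Csqrt0_neg, Csqrt0_nonneg by lra.
  replace (- (k1 ^ 2 - xi ^ 2)) with (xi ^ 2 - k1 ^ 2) by ring. fold g m.
  unfold Wform. rewrite sin_ratio_real, Cexpi_imag, !Cexpi_real by lra.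
  replace (- (2 * d) * m) with (- (2 * d * m)) by ring. rewrite cos_neg, sin_neg.
  unfold Ci, RtoC. unfold_C. f_equal; field; lra.
Qed.

Definition kcore (x : R) : R := sqrt (k2 ^ 2 - x ^ 2).
Definition kdecay (x : R) : R := sqrt (x ^ 2 - k1 ^ 2).
Definition vnum : R := sqrt (k2 ^ 2 - k1 ^ 2).
Definition phase (x : R) : R := 2 * d * kcore x - 2 * atan (kdecay x / kcore x).

Lemma vnum_pos : 0 < vnum.
Proof. apply sqrt_lt_R0. nra. Qed.

Lemma kcore_pos x : 0 <= x < k2 -> 0 < kcore x.
Proof. intros H. apply sqrt_lt_R0. nra. Qed.

Lemma W0_guided_phase x : k1 < x < k2 ->
  W0 k1 k2 d x = RtoC (exp (- (2 * d * kdecay x)) * (vnum * vnum * sin (phase x) / kcore x)).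
Proof.
  intros Hx. rewrite W0_guided by nra. fold (kdecay x) (kcore x).
  assert (Hm := kcore_pos x ltac:(lra)).
  f_equal. f_equal. unfold phase, vnum.
  rewrite sqrt_sqrt by nra.
  replace (k2 ^ 2 - k1 ^ 2) with (kcore x * kcore x + kdecay x * kdecay x)
    by (unfold kcore, kdecay; rewrite !sqrt_sqrt by nra; ring).
  rewrite <- sin_sub_2atan by exact Hm. field. lra.
Qed.

Lemma phase_decreasing x y : k1 <= x -> x < y -> y < k2 -> phase y < phase x.
Proof.
  intros H1 H2 H3. unfold phase.
  assert (Hmx := kcore_pos x ltac:(lra)). assert (Hmy := kcore_pos y ltac:(lra)).
  assert (Hm : kcore y < kcore x) by (apply sqrt_lt_1_alt; nra).
  assert (Hg : kdecay x <= kdecay y) by (apply sqrt_le_1_alt; nra).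
  assert (Hg0 : 0 <= kdecay x) by apply sqrt_pos.
  assert (Hq : kdecay x / kcore x <= kdecay y / kcore y).
  { apply Rle_trans with (kdecay y / kcore x); unfold Rdiv.
    - apply Rmult_le_compat_r; [left; apply Rinv_0_lt_compat|]; lra.
    - apply Rmult_le_compat_l; [lra | apply Rinv_le_contravar; lra]. }
  assert (atan (kdecay x / kcore x) <= atan (kdecay y / kcore y)).
  { destruct Hq as [Hq|Hq]; [left; apply atan_increasing, Hq | right; rewrite Hq; reflexivity]. }
  nra.
Qed.

Lemma phase_inj x y : k1 <= x < k2 -> k1 <= y < k2 -> phase x = phase y -> x = y.
Proof.
  intros Hx Hy E. destruct (Rtotal_order x y) as [l|[e|l]]; [|exact e|].
  - pose proof (phase_decreasing x y ltac:(lra) l ltac:(lra)). lra.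
  - pose proof (phase_decreasing y x ltac:(lra) l ltac:(lra)). lra.
Qed.

Lemma phase_k1 : phase k1 = 2 * d * vnum.
Proof.
  unfold phase, kdecay, kcore, vnum. replace (k1 ^ 2 - k1 ^ 2) with 0 by ring.
  rewrite sqrt_0. unfold Rdiv. rewrite Rmult_0_l, atan_0. ring.
Qed.

Lemma phase_bounds x : k1 < x < k2 -> - PI < phase x < 2 * d * vnum.
Proof.
  intros Hx. split.
  - unfold phase. pose proof (kcore_pos x ltac:(lra)). pose proof (atan_bound (kdecay x / kcore x)).
    nra.
  - rewrite <- phase_k1. apply phase_decreasing; lra.
Qed.

Lemma phase_continuous x : 0 <= x < k2 -> continuity_pt phase x.
Proof.
  intros Hx. apply continuity_pt_filterlim. unfold phase.
  assert (Hm := kcore_pos x Hx).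
  assert (Hsq : filterlim (fun y => y ^ 2) (locally x) (locally (x ^ 2))).
  { simpl. apply filterlim_Rmult; [|apply filterlim_Rmult; [|apply filterlim_const]];
      apply filterlim_id. }
  assert (Lm : filterlim kcore (locally x) (locally (kcore x))).
  { unfold kcore. apply (filterlim_continuous (fun y => k2 ^ 2 - y ^ 2)); [|apply continuous_sqrt].
    apply (filterlim_Rminus (fun _ => k2 ^ 2)); [apply filterlim_const | exact Hsq]. }
  assert (Lg : filterlim kdecay (locally x) (locally (kdecay x))).
  { unfold kdecay. apply (filterlim_continuous (fun y => y ^ 2 - k1 ^ 2)); [|apply continuous_sqrt].
    apply (filterlim_Rminus _ (fun _ => k1 ^ 2)); [exact Hsq | apply filterlim_const]. }
  apply filterlim_Rminus; [apply filterlim_Rmult; [apply filterlim_const | exact Lm]|].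
  apply filterlim_Rmult; [apply filterlim_const|].
  apply (filterlim_continuous (fun y => kdecay y / kcore y)); [|apply continuous_atan].
  apply filterlim_Rmult; [exact Lg | apply filterlim_Rinv; [exact Lm | lra]].
Qed.

Lemma phase_below_0 : exists x, k1 < x < k2 /\ phase x < 0.
Proof.
  pose proof vnum_pos as HV.
  assert (HV2 : vnum * vnum = k2 ^ 2 - k1 ^ 2) by (apply sqrt_sqrt; nra).
  (* at core wavenumber m <= vnum / 2 the decay rate is >= m, so atan (g / m) >= PI / 4,
     while 2 d m <= 1 *)
  set (m := Rmin (vnum / 2) (1 / (2 * d))).
  assert (Hm : 0 < m) by (apply Rmin_glb_lt; [lra | apply Rdiv_lt_0_compat; lra]).
  assert (Hm1 : m <= vnum / 2) by apply Rmin_l.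
  assert (Hm2 : 2 * d * m <= 1).
  { pose proof (Rmin_r (vnum / 2) (1 / (2 * d))) as H. fold m in H.
    apply Rmult_le_compat_l with (r := 2 * d) in H; [|lra].
    replace (2 * d * (1 / (2 * d))) with 1 in H by (field; lra). exact H. }
  set (x := sqrt (k2 ^ 2 - m ^ 2)).
  assert (Hx2 : x * x = k2 ^ 2 - m ^ 2) by (apply sqrt_sqrt; nra).
  assert (Hx0 : 0 <= x) by apply sqrt_pos.
  exists x. split; [split; nra|].
  assert (Em : kcore x = m).
  { unfold kcore. replace (k2 ^ 2 - x ^ 2) with (m * m) by nra. apply sqrt_square. lra. }
  assert (Hg : m <= kdecay x).
  { unfold kdecay. rewrite <- (sqrt_square m) by lra. apply sqrt_le_1_alt. nra. }
  assert (Ha : PI / 4 <= atan (kdecay x / kcore x)).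
  { rewrite <- atan_1, Em.
    assert (H1 : 1 <= kdecay x / m) by (apply Rmult_le_reg_r with m; [lra | unfold Rdiv;
      rewrite Rmult_assoc, Rinv_l; lra]).
    destruct H1 as [H1|H1]; [left; apply atan_increasing, H1 | rewrite <- H1; lra]. }
  unfold phase. rewrite Em in *. pose proof PI2_3_2. lra.
Qed.

Lemma phase_root (j : nat) : INR j * PI < 2 * d * vnum ->
  exists x, k1 < x < k2 /\ phase x = INR j * PI.
Proof.
  intros Hj. destruct phase_below_0 as [xL [HxL HxL']].
  destruct (Ranalysis5.IVT_interv (fun z => INR j * PI - phase z) k1 xL) as [x [Hx Hx']].
  - intros a Ha. apply continuity_pt_minus; [apply continuity_pt_const; intros u v; reflexivity|].
    apply phase_continuous. lra.
  - lra.
  - rewrite phase_k1. lra.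
  - pose proof (pos_INR j). pose proof PI_RGT_0. nra.
  - exists x. assert (Hxj : phase x = INR j * PI) by lra.
    split; [|exact Hxj]. split; [|lra].
    destruct (Req_dec x k1) as [->|]; [rewrite phase_k1 in Hxj; lra | lra].
Qed.

Lemma phase_derive_neg x : k1 < x < k2 -> exists l, l < 0 /\ is_derive phase x l.
Proof.
  intros Hx.
  assert (Hm := kcore_pos x ltac:(lra)).
  assert (Hg : 0 < kdecay x) by (apply sqrt_lt_R0; nra).
  set (q := kdecay x / kcore x).
  set (dq := x / kdecay x / kcore x + kdecay x * x / (kcore x * kcore x * kcore x)).
  exists (2 * d * (- x / kcore x) - 2 * dq / (1 + q ^ 2)). split.
  - assert (0 < dq) by (unfold dq; apply Rplus_lt_0_compat; repeat apply Rdiv_lt_0_compat;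
      repeat apply Rmult_lt_0_compat; lra).
    assert (0 < 1 + q ^ 2) by (pose proof (pow2_ge_0 q); lra).
    assert (0 < 2 * d * (x / kcore x)) by (apply Rmult_lt_0_compat; [|apply Rdiv_lt_0_compat]; lra).
    assert (0 < 2 * dq / (1 + q ^ 2)) by (apply Rdiv_lt_0_compat; lra).
    replace (2 * d * (- x / kcore x)) with (- (2 * d * (x / kcore x))) by (field; lra).
    lra.
  - unfold phase, q, dq, kdecay, kcore in *.
    assert (E1 : k2 * (k2 * 1) + - (x * (x * 1)) = k2 ^ 2 - x ^ 2) by ring.
    assert (E2 : x * (x * 1) + - (k1 * (k1 * 1)) = x ^ 2 - k1 ^ 2) by ring.
    auto_derive; rewrite ?E1, ?E2.
    + repeat split; try lra; nra.
    + field. repeat split; try lra. nra.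
Qed.

Lemma W0_simple_zero x : k1 < x < k2 -> sin (phase x) = 0 ->
  exists l : C, l <> RtoC 0 /\ is_derive (W0 k1 k2 d) x l.
Proof.
  intros Hx Hs.
  assert (Hm := kcore_pos x ltac:(lra)).
  set (P := fun y => exp (- (2 * d * kdecay y)) * (vnum * vnum) / kcore y).
  assert (HP : ex_derive P x).
  { unfold P, kdecay, kcore. auto_derive. repeat split; try nra.
    apply Rgt_not_eq, sqrt_lt_R0. nra. }
  destruct HP as [P' HP'].
  destruct (phase_derive_neg x Hx) as [th' [Hth' Hth]].
  assert (HPx : 0 < P x).
  { pose proof vnum_pos. unfold P. apply Rdiv_lt_0_compat; [|exact Hm].
    apply Rmult_lt_0_compat; [apply exp_pos | nra]. }
  assert (Hc : cos (phase x) <> 0) by (intros E; exact (cos_sin_0 _ (conj E Hs))).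
  exists (RtoC (P x * (th' * cos (phase x)))). split.
  { intros E. injection E as E. apply Rmult_integral in E as [E|E]; [lra|].
    apply Rmult_integral in E as [E|E]; lra. }
  apply (is_derive_ext_loc (fun y => RtoC (P y * sin (phase y)))).
  { apply (locally_interval _ x k1 k2); try apply Hx.
    intros y H1 H2. simpl in H1, H2. rewrite W0_guided_phase by lra.
    pose proof (kcore_pos y ltac:(lra)). unfold P. f_equal. field. lra. }
  apply is_derive_C; [simpl | exact (is_derive_const 0 x)].
  rewrite <- (Rplus_0_l (P x * _)), <- (Rmult_0_r P'), <- Hs.
  exact (is_derive_mult _ _ _ _ _ HP' (is_derive_comp _ _ _ _ _ (is_derive_sin _) Hth) Rmult_comm).
Qed.

Lemma mode_count : exists N : nat, (1 <= N)%nat /\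
  forall j : nat, (j < N)%nat <-> INR j * PI < 2 * d * vnum.
Proof.
  pose proof (vnum_pos) as HV. pose proof PI_RGT_0 as Hpi.
  set (X := 2 * d * vnum / PI).
  assert (HXP : X * PI = 2 * d * vnum) by (unfold X; field; lra).
  assert (HX : 0 < X) by (unfold X; apply Rdiv_lt_0_compat; nra).
  destruct (archimed X) as [A1 A2].
  assert (Hz : (1 <= up X)%Z) by (assert (0 < IZR (up X)) by lra; apply lt_IZR in H; lia).
  set (N := Z.to_nat (up X)).
  assert (EN : INR N = IZR (up X)) by (unfold N; rewrite INR_IZR_INZ, Z2Nat.id by lia; reflexivity).
  (* [up X] overshoots [X] by one exactly when [X] is an integer, which [hres] excludes *)
  assert (HNX : INR N - 1 < X).
  { destruct (Rle_lt_or_eq_dec _ _ A2) as [H|H]; [lra|].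
    assert (HN : (1 < N)%nat) by (apply INR_lt; simpl; lra).
    exfalso. apply (hres (N - 1)); [lia|].
    rewrite minus_INR by lia. change (sqrt (k2 ^ 2 - k1 ^ 2)) with (vnum). simpl INR. nra. }
  exists N. split; [unfold N; lia|]. intros j. split; intros Hj.
  - rewrite <- HXP. apply Rmult_lt_compat_r; [lra|].
    apply le_INR in Hj. rewrite S_INR in Hj. lra.
  - apply INR_lt. rewrite EN. apply Rmult_lt_reg_r with PI; [lra|]. nra.
Qed.
Lemma phase_modes : exists (N : nat) (xis : nat -> R), (1 <= N)%nat /\
  (forall n, (1 <= n <= N)%nat -> k1 < xis n < k2 /\ sin (phase (xis n)) = 0) /\
  (forall x, k1 < x < k2 -> sin (phase x) = 0 ->
     exists n, (1 <= n <= N)%nat /\ x = xis n).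
Proof.
  destruct mode_count as [N [HN Hcount]].
  assert (Hroot : forall n : nat, exists x, (1 <= n <= N)%nat ->
            k1 < x < k2 /\ phase x = INR (n - 1) * PI).
  { intros n. destruct (le_dec 1 n), (le_dec n N); try (exists 0; lia).
    destruct (phase_root (n - 1)) as [x Hx]; [apply Hcount; lia|].
    exists x. intros _. exact Hx. }
  set (xis := fun n => proj1_sig (constructive_indefinite_description _ (Hroot n))).
  assert (Hxis : forall n, (1 <= n <= N)%nat ->
            k1 < xis n < k2 /\ phase (xis n) = INR (n - 1) * PI).
  { intros n. exact (proj2_sig (constructive_indefinite_description _ (Hroot n))). }
  exists N, xis. split; [exact HN|]. split.
  - intros n Hn. destruct (Hxis n Hn) as [Hx Hp]. split; [exact Hx|].
    rewrite Hp, INR_IZR_INZ. apply sin_eq_0_1. eexists. reflexivity.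
  - intros x Hx Hs. destruct (phase_bounds x Hx) as [Hlow Hup].
    destruct (sin_eq_0_nat _ Hlow Hs) as [j Hj].
    assert (HjN : (j < N)%nat) by (apply Hcount; rewrite <- Hj; exact Hup).
    exists (S j). split; [lia|].
    destruct (Hxis (S j) ltac:(lia)) as [Hxj Hpj].
    apply phase_inj; [lra | lra |].
    rewrite Hpj, Hj. f_equal. f_equal. lia.
Qed.

Lemma W0_zero_guided xi : W0 k1 k2 d xi = RtoC 0 -> k1 < Rabs xi < k2.
Proof.
  intros E.
  assert (Hsq : xi ^ 2 = Rabs xi ^ 2) by (rewrite <- !Rsqr_pow2; apply Rsqr_abs).
  pose proof (Rabs_pos xi).
  destruct (Rle_or_lt (Rabs xi) k1) as [H1|H1].
  { exfalso. apply (W0_radiating_neq0 xi); [nra | exact E]. }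
  destruct (Rlt_or_le (Rabs xi) k2) as [H2|H2]; [lra|].
  exfalso. apply (W0_outer_neq0 xi); [nra | exact E].
Qed.

Lemma W0_zero_iff_phase x : k1 < x < k2 -> W0 k1 k2 d x = RtoC 0 <-> sin (phase x) = 0.
Proof.
  intros Hx. rewrite (W0_guided_phase x Hx).
  pose proof (exp_pos (- (2 * d * kdecay x))). pose proof (vnum_pos).
  pose proof (kcore_pos x ltac:(lra)).
  split; intros E.
  - injection E as E. apply Rmult_integral in E as [E|E]; [lra|].
    unfold Rdiv in E. apply Rmult_integral in E as [E|E].
    + apply Rmult_integral in E as [E|E]; [nra | exact E].
    + exfalso. exact (Rinv_neq_0_compat (kcore x) ltac:(lra) E).
  - rewrite E. unfold RtoC. f_equal. field. lra.
Qed.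

Lemma W0_modes : exists (N : nat) (xis : nat -> R),
  (1 <= N)%nat /\
  (forall n, (1 <= n <= N)%nat -> k1 < Rabs (xis n) < k2) /\
  (forall n, (1 <= n <= N)%nat ->
     (exists l : C, l <> RtoC 0 /\ is_derive (W0 k1 k2 d) (xis n) l) /\
     (exists l : C, l <> RtoC 0 /\ is_derive (W0 k1 k2 d) (- xis n) l)) /\
  (forall xi, W0 k1 k2 d xi = RtoC 0 <->
     exists n, (1 <= n <= N)%nat /\ (xi = xis n \/ xi = - xis n)).
Proof.
  destruct phase_modes as [N [xis [HN [Hroot Hall]]]].
  exists N, xis. split; [exact HN|]. split; [|split].
  - intros n Hn. rewrite Rabs_pos_eq by (pose proof (Hroot n Hn); lra). apply Hroot, Hn.
  - intros n Hn. destruct (Hroot n Hn) as [Hx Hs].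
    destruct (W0_simple_zero _ Hx Hs) as [l [Hl Hd]].
    split; [exists l; auto|].
    exists (- l)%C. split; [|exact (is_derive_W0_opp _ _ Hd)].
    intros E. apply Hl. replace l with (- - l)%C by ring. rewrite E. ring.
  - intros xi. split.
    + intros E. pose proof (W0_zero_guided xi E) as Hx.
      assert (E' : W0 k1 k2 d (Rabs xi) = RtoC 0).
      { destruct (Rle_or_lt 0 xi); [rewrite Rabs_pos_eq | rewrite Rabs_left, W0_even]; auto. }
      apply W0_zero_iff_phase in E'; [|exact Hx].
      destruct (Hall _ Hx E') as [n [Hn Hxn]]. exists n. split; [exact Hn|].
      destruct (Rle_or_lt 0 xi);
        [left; rewrite <- Hxn, Rabs_pos_eq | right; rewrite <- Hxn, Rabs_left]; lra.
    + intros [n [Hn [-> | ->]]]; [|rewrite W0_even];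
        apply W0_zero_iff_phase; apply Hroot, Hn.
Qed.

End Waveguide.

Theorem theorem2 (k1 k2 d : R)
  (up up' um um' : R -> R -> R -> C)
  (hk1 : 0 < k1) (hk12 : k1 < k2) (hd : 0 < d)
  (hres : forall n : nat, (1 <= n)%nat ->
            2 * d * sqrt (k2 ^ 2 - k1 ^ 2) <> INR n * PI)
  (hup : forall xi delta, 0 < delta ->
           is_u_plus k1 k2 d xi delta (up xi delta) (up' xi delta))
  (hum : forall xi delta, 0 < delta ->
           is_u_minus k1 k2 d xi delta (um xi delta) (um' xi delta)) :
  let W := fun xi delta =>
    wronskian (um xi delta) (um' xi delta) (up xi delta) (up' xi delta) 0 in
  (* no solutions with delta > 0 *)
  (forall xi delta, 0 < delta -> W xi delta <> 0%C) /\
  (* W(xi, 0+) exists for every real xi, and its zeros are exactly the +-xi_n *)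
  exists W0 : R -> C,
    (forall xi, filterlim (fun delta => W xi delta) (at_right 0) (locally (W0 xi))) /\
    exists (N : nat) (xis : nat -> R),
      (1 <= N)%nat /\
      (forall n, (1 <= n <= N)%nat -> k1 < Rabs (xis n) < k2) /\
      (forall n, (1 <= n <= N)%nat ->
         (exists l : C, l <> 0%C /\ is_derive W0 (xis n) l) /\
         (exists l : C, l <> 0%C /\ is_derive W0 (- xis n) l)) /\
      (forall xi, W0 xi = 0%C <->
         exists n, (1 <= n <= N)%nat /\ (xi = xis n \/ xi = - xis n)).
Proof.
  intros W. split.
  - intros xi delta hdel.
    exact (wronskian_neq0 _ _ _ _ _ _ _ _ _ hd hdel (hup xi delta hdel) (hum xi delta hdel)).
  - exists (W0 k1 k2 d). split.
    + intros xi. exact (wronskian_limit k1 k2 d xi up up' um um' hd hup hum).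
    + exact (W0_modes k1 k2 d hk1 hk12 hd hres).
Qed.
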